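(* Let $(\Delta,\mathcal H)$ be a generic cut and $K_\Delta,K_+,K_-$ the associated simplicial complexes on $\widetilde{[m]}=[m]\cup\{o\}$ as defined below. Then $$K_+\cap K_-=\operatorname{star}_{K_+\cup K_-}(o)=\operatorname{star}_{K_+}(o)=\operatorname{star}_{K_-}(o),$$ $$(K_+\cup K_-)\setminus K_\Delta=O_{K_+\cup K_-}(o)=O_{K_+}(o)=O_{K_-}(o).$$
   Context: Let $\Delta\subset\mathbb R^n$ be an $n$-dimensional simple polytope $\Delta=\{x:\langle x,\lambda_i\rangle+\eta_i\ge0,\ i=1,\dots,m\}$ (bounding hyperplanes in general position), whose facets $H_i=\Delta\cap\{\langle x,\lambda_i\rangle+\eta_i=0\}$ are all nonempty. A generic cut is a hyperplane $\mathcal H=\{\langle x,\lambda_0\rangle+\xi=0\}$ such that $\mathcal H$ and the hyperplanes $\{\langle x,\lambda_i\rangle+\eta_i=0\}$ are in general position and $H_o:=\mathcal H\cap\Delta\ne\varnothing$. Set $\Delta_+=\Delta\cap\{\langle x,\lambda_0\rangle+\xi\ge0\}$, $\Delta_-=\Delta\cap\{\langle x,\lambda_0\rangle+\xi\le0\}$. Define simplicial complexes on $\widetilde{[m]}$: $K_\Delta=\{\sigma\subset[m]:\bigcap_{i\in\sigma}H_i\ne\varnothing\}\cup\{\varnothing\}$, $K_\pm=\{\sigma\subset\widetilde{[m]}:\bigcap_{i\in\sigma}(H_i\cap\Delta_\pm)\ne\varnothing\}\cup\{\varnothing\}$ (with $H_o$ the facet indexed by $o$). For a simplicial complex $K$ and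 a vertex $o$: $O_K(o)=\{\sigma\in K: o\in\sigma\}$, and $\operatorname{star}_K(o)$ is its closure, i.e. the set of all subsets of faces of $K$ containing $o$. *)

From HB Require Import structures.
From mathcomp Require Import all_boot all_order all_algebra.
From mathcomp Require Import boolp classical_sets.
Set Implicit Arguments. Unset Strict Implicit. Unset Printing Implicit Defensive.
Import Order.TTheory GRing.Theory Num.Theory.
Local Open Scope ring_scope.
Local Open Scope classical_set_scope.

Section Defs.
Variable R : realFieldType.
Variable n : nat.

Definition dotr (x y : 'rV[R]_n) : R := \sum_(j < n) x 0 j * y 0 j.

Definition hval (I : Type) (lam : I -> 'rV[R]_n) (eta : I -> R) (i : I)
  (x : 'rV[R]_n) : R := dotr x (lam i) + eta i.

Definition general_position (I : finType) (lam : I -> 'rV[R]_n) (eta : I -> R) :=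
  forall S : {set I},
    (exists x, forall i, i \in S -> hval lam eta i x = 0) ->
    forall c : I -> R, \sum_(i in S) c i *: lam i = 0 ->
    forall i, i \in S -> c i = 0.

Definition in_poly (m : nat) (lam : 'I_m -> 'rV[R]_n) (eta : 'I_m -> R)
  (x : 'rV[R]_n) := forall i, 0 <= hval lam eta i x.

(* Delta is an n-dimensional (nonempty interior) bounded polytope whose
   bounding hyperplanes are in general position (hence simple) and all of
   whose facets H_i are nonempty. *)
Definition simple_polytope (m : nat) (lam : 'I_m -> 'rV[R]_n) (eta : 'I_m -> R) :=
  [/\ general_position lam eta,
      (exists x, forall i, 0 < hval lam eta i x),
      (exists M : R, forall x, in_poly lam eta x -> forall j, `|x 0 j| <= M) &
      (forall i, exists x, in_poly lam eta x /\ hval lam eta i x = 0)].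

(* the extended family indexed by [m]~ = option 'I_m, None = o *)
Definition ext_lam (m : nat) (lam : 'I_m -> 'rV[R]_n) (lam0 : 'rV[R]_n) :
  option 'I_m -> 'rV[R]_n := fun i => if i is Some k then lam k else lam0.
Definition ext_eta (m : nat) (eta : 'I_m -> R) (xi : R) : option 'I_m -> R :=
  fun i => if i is Some k then eta k else xi.

Definition generic_cut (m : nat) (lam : 'I_m -> 'rV[R]_n) (eta : 'I_m -> R)
  (lam0 : 'rV[R]_n) (xi : R) :=
  general_position (ext_lam lam lam0) (ext_eta eta xi) /\
  exists x, in_poly lam eta x /\ dotr x lam0 + xi = 0.

(* K_Delta, as a complex on [m]~ (its faces avoid o) *)
Definition K_Delta (m : nat) (lam : 'I_m -> 'rV[R]_n) (eta : 'I_m -> R) :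
  set {set option 'I_m} :=
  [set s | s = finset.set0 \/
           (None \notin s /\
            exists x, in_poly lam eta x /\
                      forall i : 'I_m, Some i \in s -> hval lam eta i x = 0)].

(* K_+ (b = true) and K_- (b = false).  For i in [m], H_i cap Delta_pm is
   Delta_pm cap {h_i = 0}; for o, H_o cap Delta_pm = H_o = Delta cap H. *)
Definition K_half (m : nat) (lam : 'I_m -> 'rV[R]_n) (eta : 'I_m -> R)
  (lam0 : 'rV[R]_n) (xi : R) (b : bool) : set {set option 'I_m} :=
  [set s | s = finset.set0 \/
           exists x, [/\ in_poly lam eta x,
                         (if b then 0 <= dotr x lam0 + xi
                               else dotr x lam0 + xi <= 0) &
                         forall i, i \in s ->
                           hval (ext_lam lam lam0) (ext_eta eta xi) i x = 0]].

End Defs.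

Definition O_at (I : finType) (K : set {set I}) (o : I) : set {set I} :=
  [set s | K s /\ o \in s].
Definition star_at (I : finType) (K : set {set I}) (o : I) : set {set I} :=
  [set t | exists s, [/\ K s, o \in s & t \subset s]].

(* Every face of K_+ or K_- containing o is a face of the facet H_o = Delta cap H, and
   conversely, so all the stars and open stars of o coincide with the complex of faces of
   H_o (with o adjoined or not).  The only geometric input is convexity: a face of both
   K_+ and K_- has points on both sides of H, hence, moving along the segment joining them,
   a point on H. *)
From HB Require Import structures.
From mathcomp Require Import all_boot all_order all_algebra.
From mathcomp Require Import boolp classical_sets.
Set Implicit Arguments. Unset Strict Implicit. Unset Printing Implicit Defensive.
Import Order.TTheory GRing.Theory Num.Theory.
Local Open Scope ring_scope.
Local Open Scope classical_set_scope.

Lemma convex_root (R : realFieldType) (a b : R) : 0 <= a -> b <= 0 ->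
  exists c d : R, [/\ 0 <= c, 0 <= d, c + d = 1 & c * a + d * b = 0].
Proof.
move=> a_ge0 b_le0; have [ab0 | ab_neq0] := eqVneq (a - b) 0.
  have a0 : a = 0.
    by apply/eqP; move/eqP: ab0; rewrite paddr_eq0 ?oppr_ge0 // => /andP[].
  by exists 1, 0; split; rewrite ?a0 ?mulr0 ?mul0r ?addr0.
have ab_gt0 : 0 < a - b by rewrite lt_def ab_neq0 addr_ge0 ?oppr_ge0.
exists (- b / (a - b)), (a / (a - b)); split.
- by rewrite divr_ge0 ?oppr_ge0 // ltW.
- by rewrite divr_ge0 // ltW.
- by rewrite -mulrDl addrC divff.
- by rewrite mulrAC [a / _ * b]mulrAC -mulrDl mulNr [b * a]mulrC addNr mul0r.
Qed.

Section Convexity.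
Variables (R : realFieldType) (n : nat).

Lemma dotrDZ (c d : R) (x z l : 'rV[R]_n) :
  dotr (c *: x + d *: z) l = c * dotr x l + d * dotr z l.
Proof.
rewrite /dotr !mulr_sumr -big_split /=; apply: eq_bigr => j _.
by rewrite !mxE mulrDl !mulrA.
Qed.

Lemma hval_convex (I : Type) (lam : I -> 'rV[R]_n) (eta : I -> R) i
    (c d : R) (x z : 'rV[R]_n) : c + d = 1 ->
  hval lam eta i (c *: x + d *: z) = c * hval lam eta i x + d * hval lam eta i z.
Proof.
move=> cd1; rewrite /hval dotrDZ -{1}[eta i]mul1r -cd1.
by rewrite !mulrDr mulrDl addrACA.
Qed.

End Convexity.

Section Stars.
Variables (I : finType) (o : I) (K C : set {set I}).
Hypothesis K_C : forall s, K s -> o \in s -> C s.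

Lemma star_atE : (forall s, C s -> K (o |: s)) ->
  (forall s t : {set I}, C s -> t \subset s -> C t) -> star_at K o = C.
Proof.
move=> C_K C_sub; apply/seteqP; split => t.
  by case=> s [Ks os ts]; exact: C_sub (K_C Ks os) ts.
by move=> Ct; exists (o |: t); rewrite setU11 finset.subsetUr; split=> //; exact: C_K.
Qed.

Lemma O_atE : C `<=` K -> O_at K o = C `&` [set s | o \in s].
Proof.
move=> C_K; apply/seteqP; split => t [Kt ot]; split => //; first exact: K_C.
exact: C_K.
Qed.

End Stars.

Section GenericCut.
Variables (R : realFieldType) (n m : nat).
Variables (lam : 'I_m -> 'rV[R]_n) (eta : 'I_m -> R) (lam0 : 'rV[R]_n) (xi : R).

(* [h None] is the affine function defining the cut H. *)
Local Notation h := (hval (ext_lam lam lam0) (ext_eta eta xi)).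
Local Notation K := (K_half lam eta lam0 xi).

Definition on_cut_face (s : {set option 'I_m}) (x : 'rV[R]_n) :=
  [/\ in_poly lam eta x, h None x = 0 & forall i, i \in s -> h i x = 0].

Definition cut_faces : set {set option 'I_m} := [set s | exists x, on_cut_face s x].

Lemma cut_faces_sub (s t : {set option 'I_m}) : cut_faces s -> t \subset s -> cut_faces t.
Proof.
by case=> x [xD xH xs] ts; exists x; split=> // i /(fintype.subsetP ts); apply: xs.
Qed.

Lemma cut_faces_setU1 s : cut_faces s -> cut_faces (None |: s).
Proof.
by case=> x [xD xH xs]; exists x; split=> // i; rewrite in_setU1 => /predU1P[-> | /xs].
Qed.

Lemma cut_faces_K_half b : cut_faces `<=` K b.
Proof.
move=> s [x [xD xH xs]]; right; exists x.
by split=> //; case: b; rewrite [dotr _ _ + _]xH.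
Qed.

Lemma K_half_cut_faces b s : K b s -> None \in s -> cut_faces s.
Proof.
case=> [-> | [x [xD _ xs]]]; first by rewrite inE.
by move=> os; exists x; split=> //; exact: xs.
Qed.

Lemma K_halfU_cut_faces s : (K true `|` K false) s -> None \in s -> cut_faces s.
Proof. by case; apply: K_half_cut_faces. Qed.

Lemma K_half_Delta b s : K b s -> None \notin s -> K_Delta lam eta s.
Proof.
case=> [-> | [x [xD _ xs]]] os; first by left.
by right; split=> //; exists x; split=> // i /xs.
Qed.

Lemma K_Delta_notin s : K_Delta lam eta s -> None \in s -> False.
Proof. by case=> [-> | [os _]]; rewrite ?inE // (negbTE os). Qed.

Hypothesis cut_meets_Delta : exists x, in_poly lam eta x /\ dotr x lam0 + xi = 0.

Lemma K_halfI : K true `&` K false = cut_faces.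
Proof.
have cut0 : cut_faces finset.set0.
  by case: cut_meets_Delta => x [xD xH]; exists x; split=> // i; rewrite inE.
apply/seteqP; split => s; last by move=> Cs; split; exact: cut_faces_K_half.
case=> -[-> // | [xp [xpD xp_ge0 xps]]] [-> // | [xm [xmD xm_le0 xms]]].
have [c [d [c_ge0 d_ge0 cd1 cd0]]] := convex_root xp_ge0 xm_le0.
exists (c *: xp + d *: xm); split.
- by move=> i; rewrite [hval _ _ _ _]hval_convex // addr_ge0 ?mulr_ge0.
- by rewrite hval_convex.
- by move=> i si; rewrite hval_convex // xps // xms // !mulr0 addr0.
Qed.

Lemma star_K_half b : star_at (K b) None = cut_faces.
Proof.
apply: star_atE; [exact: K_half_cut_faces | | exact: cut_faces_sub].
by move=> s /cut_faces_setU1; apply: cut_faces_K_half.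
Qed.

Lemma star_K_halfU : star_at (K true `|` K false) None = cut_faces.
Proof.
apply: star_atE; [exact: K_halfU_cut_faces | | exact: cut_faces_sub].
by move=> s /cut_faces_setU1 Cs; left; exact: cut_faces_K_half.
Qed.

Lemma O_K_half b : O_at (K b) None = cut_faces `&` [set s | None \in s].
Proof. by apply: O_atE; [exact: K_half_cut_faces | exact: cut_faces_K_half]. Qed.

Lemma O_K_halfU : O_at (K true `|` K false) None = cut_faces `&` [set s | None \in s].
Proof.
by apply: O_atE; [exact: K_halfU_cut_faces | move=> s Cs; left; exact: cut_faces_K_half].
Qed.

Lemma K_halfU_setD_Delta :
  (K true `|` K false) `\` K_Delta lam eta = cut_faces `&` [set s | None \in s].
Proof.
apply/seteqP; split => s.
  case=> Ks notD; have [os | os] := boolP (None \in s).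
    by split=> //; exact: K_halfU_cut_faces.
  by case: notD; case: Ks => /K_half_Delta; apply.
case=> Cs os; split; first by left; exact: cut_faces_K_half.
by move/K_Delta_notin; apply.
Qed.

End GenericCut.

Theorem lemma3p8 (R : realFieldType) (n m : nat)
  (lam : 'I_m -> 'rV[R]_n) (eta : 'I_m -> R) (lam0 : 'rV[R]_n) (xi : R) :
  simple_polytope lam eta ->
  generic_cut lam eta lam0 xi ->
  [/\ K_half lam eta lam0 xi true `&` K_half lam eta lam0 xi false
        = star_at (K_half lam eta lam0 xi true `|` K_half lam eta lam0 xi false) None,
      star_at (K_half lam eta lam0 xi true `|` K_half lam eta lam0 xi false) None
        = star_at (K_half lam eta lam0 xi true) None &
      star_at (K_half lam eta lam0 xi true) None
        = star_at (K_half lam eta lam0 xi false) None] /\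
  [/\ (K_half lam eta lam0 xi true `|` K_half lam eta lam0 xi false) `\` K_Delta lam eta
        = O_at (K_half lam eta lam0 xi true `|` K_half lam eta lam0 xi false) None,
      O_at (K_half lam eta lam0 xi true `|` K_half lam eta lam0 xi false) None
        = O_at (K_half lam eta lam0 xi true) None &
      O_at (K_half lam eta lam0 xi true) None
        = O_at (K_half lam eta lam0 xi false) None].
Proof.
move=> _ [_ cut_meets_Delta].
rewrite (K_halfI cut_meets_Delta) star_K_halfU !star_K_half.
by rewrite K_halfU_setD_Delta O_K_halfU !O_K_half.
Qed.
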